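(* Let $k\ge 1$ be an integer. In the power series expansions (in $y,z,q$) of $$\frac{1}{(yq;q)_\infty}\sum_{n\ge 0}\frac{(-1)^n y^n q^{n(n+1)/2} (z;q^k)_n}{(q;q)_n}$$ and of $$(-yq;q)_\infty \sum_{n\ge 0}\frac{(-1)^n y^n q^n (z;q^k)_n}{(q;q)_n},$$ the coefficient of $y^\ell z^m q^n$ is nonnegative for all $\ell,m,n$.
   Context: The $q$-Pochhammer symbol is $(A;q)_n=\prod_{j=0}^{n-1}(1-Aq^j)$ for $n\in\mathbb{N}\cup\{\infty\}$. *)

(* Formal power series in three variables y, z, q with
   integer coefficients, represented by their coefficient function:
   F l m n = coefficient of y^l z^m q^n. *)
From mathcomp Require Import all_boot all_algebra.
Set Implicit Arguments. Unset Strict Implicit. Unset Printing Implicit Defensive.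
Import GRing.Theory.
Local Open Scope ring_scope.

Definition series := nat -> nat -> nat -> int.

Definition s_zero : series := fun _ _ _ => 0.
Definition s_add (F G : series) : series := fun l m n => F l m n + G l m n.
Definition s_opp (F : series) : series := fun l m n => - F l m n.
Definition s_mul (F G : series) : series := fun l m n =>
  \sum_(a < l.+1) \sum_(b < m.+1) \sum_(c < n.+1)
     F a b c * G (l - a)%N (m - b)%N (n - c)%N.
Definition s_mono (c : int) (i j e : nat) : series := fun l m n =>
  if [&& l == i, m == j & n == e] then c else 0.
Definition s_one : series := s_mono 1 0 0 0.
Definition s_y : series := s_mono 1 1 0 0.
Definition s_z : series := s_mono 1 0 1 0.
Definition s_q (e : nat) : series := s_mono 1 0 0 e.
Definition s_pow (F : series) (i : nat) : series := iter i (s_mul F) s_one.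

(* This is the q-adic limit whenever S_N and S_(N+1)
   agree modulo q^(N+1) (all uses below are of this kind). *)
Definition qlim (S : nat -> series) : series := fun l m n => S n.+1 l m n.

(* multiplicative inverse of a series F with F = 1 mod q:
   1/F = sum_(i >= 0) (1 - F)^i  (q-adically convergent) *)
Definition s_inv (F : series) : series :=
  qlim (fun N => \big[s_add/s_zero]_(i < N) s_pow (s_add s_one (s_opp F)) i).

Definition qpoch (A : series) (b N : nat) : series :=
  \big[s_mul/s_one]_(j < N) s_add s_one (s_opp (s_mul A (s_q (b * j)))).
(* (A; q^b)_oo, for A = 0 mod q and b >= 1 *)
Definition qpoch_inf (A : series) (b : nat) : series := qlim (qpoch A b).

Definition series1 (k : nat) : series :=
  s_mul (s_inv (qpoch_inf (s_mul s_y (s_q 1)) 1))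
    (qlim (fun N => \big[s_add/s_zero]_(n < N)
       s_mul (s_mono ((-1) ^+ n) n 0 ((n * n.+1)./2))
             (s_mul (qpoch s_z k n) (s_inv (qpoch (s_q 1) 1 n))))).

Definition series2 (k : nat) : series :=
  s_mul (qpoch_inf (s_opp (s_mul s_y (s_q 1))) 1)
    (qlim (fun N => \big[s_add/s_zero]_(n < N)
       s_mul (s_mono ((-1) ^+ n) n 0 n)
             (s_mul (qpoch s_z k n) (s_inv (qpoch (s_q 1) 1 n))))).

From HB Require Import structures.
From mathcomp Require Import all_boot all_algebra.
From mathcomp Require Import boolp ring zify.
Set Implicit Arguments. Unset Strict Implicit. Unset Printing Implicit Defensive.
Import GRing.Theory Num.Theory.
Local Open Scope ring_scope.

(* Let A(y) be either sum and t_n(y) its n-th term.  Then t_n(yq^a) = q^(an) t_n(y) and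
   (1 - q^(n+1)) t_(n+1) = -y q^(d_n) (1 - z q^(kn)) t_n, with d_n = n + 1, resp. d_n = 1,
   so the partial sums telescope and A satisfies the q-difference equation
     A(y) = (1 - yq) A(yq) + yqz A(yq^(k+1)),   resp.   (1 + yq) A(y) = A(yq) + yqz A(yq^k).
   Multiplying by the infinite product turns both into
     B(y) = B(yq) + yqz H(y) B(yq^a),
   where H = 1/(yq;q)_(k+1), resp. H = (-yq^2;q)_(k-1), has nonnegative coefficients,
   and B(0) = 1.  Comparing coefficients of y^l z^m q^n, induction on l and then on n
   shows that all coefficients of B are nonnegative. *)

(** * The ring of series *)

Lemma series_ext (F G : series) : (forall l m n, F l m n = G l m n) -> F = G.
Proof. by move=> FG; do 3 apply/funext => ?; apply: FG. Qed.

HB.instance Definition _ := Choice.on series.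

Lemma s_addA : associative s_add.
Proof. by move=> F G H; apply: series_ext => l m n; apply: addrA. Qed.
Lemma s_addC : commutative s_add.
Proof. by move=> F G; apply: series_ext => l m n; apply: addrC. Qed.
Lemma s_add0 : left_id s_zero s_add.
Proof. by move=> F; apply: series_ext => l m n; apply: add0r. Qed.
Lemma s_addN : left_inverse s_zero s_opp s_add.
Proof. by move=> F; apply: series_ext => l m n; apply: addNr. Qed.

HB.instance Definition _ := GRing.isZmodule.Build series s_addA s_addC s_add0 s_addN.

Definition eq_on (D : nat -> nat -> nat -> bool) (F G : series) :=
  forall l m n, D l m n -> F l m n = G l m n.

Definition lower_set (D : nat -> nat -> nat -> bool) :=
  forall a b c l m n, (a <= l)%N -> (b <= m)%N -> (c <= n)%N -> D l m n -> D a b c.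

Lemma eq_on_refl D F : eq_on D F F.
Proof. by []. Qed.

Lemma eq_on_s_mul D F F' G G' : lower_set D ->
  eq_on D F F' -> eq_on D G G' -> eq_on D (s_mul F G) (s_mul F' G').
Proof.
move=> lowD FF' GG' l m n Dlmn.
apply: eq_bigr => a _; apply: eq_bigr => b _; apply: eq_bigr => c _.
by rewrite FF' ?GG' //; apply: lowD Dlmn; rewrite ?leq_subr // -ltnS.
Qed.

Definition box l m n a b c := [&& a <= l, b <= m & c <= n]%N.

Lemma lower_box l m n : lower_set (box l m n).
Proof.
move=> a b c l' m' n' al bm cn /and3P[l'l m'm n'n].
by rewrite /box (leq_trans al) ?(leq_trans bm) ?(leq_trans cn).
Qed.

Lemma box_self l m n : box l m n l m n.
Proof. by rewrite /box !leqnn. Qed.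

(* A coefficient of a product only involves a finite box of coefficients of the
   factors, so the ring laws are transferred from polynomials in three variables. *)
Definition of_poly3 (P : {poly {poly {poly int}}}) : series := fun l m n => P`_l`_m`_n.

Definition trunc3 N (F : series) : {poly {poly {poly int}}} :=
  \poly_(a < N) \poly_(b < N) \poly_(c < N) F a b c.

Lemma of_poly3M P Q : of_poly3 (P * Q) = s_mul (of_poly3 P) (of_poly3 Q).
Proof.
apply: series_ext => l m n; rewrite /of_poly3 /s_mul coefM !coef_sum.
apply: eq_bigr => a _; rewrite coefM coef_sum; apply: eq_bigr => b _.
by rewrite coefM.
Qed.

Lemma of_poly3_1 : of_poly3 1 = s_one.
Proof.
apply: series_ext => l m n; rewrite /of_poly3 /s_one /s_mono !coefC.
by case: l => [|l]; rewrite ?coef0 //= coefC; case: m => [|m]; rewrite ?coef0 //= coefC.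
Qed.

Lemma eq_on_trunc3 l m n F : eq_on (box l m n) F (of_poly3 (trunc3 (l + m + n).+1 F)).
Proof.
move=> a b c /and3P[al bm cn]; rewrite /of_poly3.
have [al' bm' cn'] : [/\ a < (l + m + n).+1, b < (l + m + n).+1 & c < (l + m + n).+1]%N.
  by split; lia.
by rewrite coef_poly al' coef_poly bm' coef_poly cn'.
Qed.

Lemma s_mulA : associative s_mul.
Proof.
move=> F G H; apply: series_ext => l m n; have low := @lower_box l m n.
have eF := @eq_on_trunc3 l m n F; have eG := @eq_on_trunc3 l m n G.
have eH := @eq_on_trunc3 l m n H.
rewrite (eq_on_s_mul low eF (eq_on_s_mul low eG eH)) ?box_self //.
rewrite (eq_on_s_mul low (eq_on_s_mul low eF eG) eH) ?box_self //.
by rewrite -!of_poly3M mulrA.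
Qed.

Lemma s_mulC : commutative s_mul.
Proof.
move=> F G; apply: series_ext => l m n; have low := @lower_box l m n.
have eF := @eq_on_trunc3 l m n F; have eG := @eq_on_trunc3 l m n G.
by rewrite (eq_on_s_mul low eF eG) ?(eq_on_s_mul low eG eF) ?box_self // -!of_poly3M mulrC.
Qed.

Lemma s_mul1 : left_id s_one s_mul.
Proof.
move=> F; apply: series_ext => l m n; have eF := @eq_on_trunc3 l m n F.
rewrite -of_poly3_1 (eq_on_s_mul (@lower_box l m n) (@eq_on_refl _ _) eF) ?box_self //.
by rewrite -of_poly3M mul1r eF ?box_self.
Qed.

Lemma s_mulDl : left_distributive s_mul s_add.
Proof.
move=> F G H; apply: series_ext => l m n; rewrite /s_mul /s_add -big_split.
apply: eq_bigr => a _; rewrite -big_split; apply: eq_bigr => b _.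
by rewrite -big_split; apply: eq_bigr => c _; apply: mulrDl.
Qed.

HB.instance Definition _ :=
  GRing.Zmodule_isComPzRing.Build series s_mulA s_mulC s_mul1 s_mulDl.

Lemma s_mulE (F G : series) : F * G = s_mul F G. Proof. by []. Qed.
Lemma serD (F G : series) l m n : (F + G) l m n = F l m n + G l m n. Proof. by []. Qed.
Lemma serN (F : series) l m n : (- F) l m n = - F l m n. Proof. by []. Qed.
Lemma serB (F G : series) l m n : (F - G) l m n = F l m n - G l m n. Proof. by []. Qed.
Lemma ser0 l m n : (0 : series) l m n = 0. Proof. by []. Qed.
Lemma ser_sum I (r : seq I) (P : pred I) (F : I -> series) l m n :
  (\sum_(i <- r | P i) F i) l m n = \sum_(i <- r | P i) F i l m n.
Proof. by elim/big_rec2: _ => // i x y _ <-. Qed.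

Section EqOn.
Variable D : nat -> nat -> nat -> bool.

Lemma eq_on_sym F G : eq_on D F G -> eq_on D G F.
Proof. by move=> FG l m n Dlmn; rewrite FG. Qed.

Lemma eq_on_trans F G H : eq_on D F G -> eq_on D G H -> eq_on D F H.
Proof. by move=> FG GH l m n Dlmn; rewrite FG ?GH. Qed.

Lemma eq_onD F F' G G' : eq_on D F F' -> eq_on D G G' -> eq_on D (F + G) (F' + G').
Proof. by move=> FF' GG' l m n Dlmn; rewrite !serD FF' ?GG'. Qed.

Lemma eq_onB F F' G G' : eq_on D F F' -> eq_on D G G' -> eq_on D (F - G) (F' - G').
Proof. by move=> FF' GG' l m n Dlmn; rewrite !serB FF' ?GG'. Qed.

Hypothesis lowD : lower_set D.

Lemma eq_onM F F' G G' : eq_on D F F' -> eq_on D G G' -> eq_on D (F * G) (F' * G').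
Proof. exact: eq_on_s_mul. Qed.

Lemma eq_on_prod I (r : seq I) (P : pred I) (F G : I -> series) :
  (forall i, P i -> eq_on D (F i) (G i)) ->
  eq_on D (\prod_(i <- r | P i) F i) (\prod_(i <- r | P i) G i).
Proof. by move=> FG; elim/big_rec2: _ => // i x y /FG; apply: eq_onM. Qed.

End EqOn.

Lemma sum_ord_only n i (F : 'I_n.+1 -> int) :
  (forall a : 'I_n.+1, a != i :> nat -> F a = 0) ->
  \sum_(a < n.+1) F a = if (i <= n)%N then F (inord i) else 0.
Proof.
move=> F0; case: leqP => [le_in|lt_ni].
  by rewrite (big_only1 (inord i)) // => a; rewrite -val_eqE /= inordK ?ltnS // => /F0.
by rewrite big1 // => a _; apply: F0; rewrite neq_ltn (leq_trans (ltn_ord a)).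
Qed.

Lemma s_mono_mulE c i j e (G : series) l m n :
  (s_mono c i j e * G) l m n =
  if [&& i <= l, j <= m & e <= n]%N then c * G (l - i)%N (m - j)%N (n - e)%N else 0.
Proof.
rewrite s_mulE /s_mul /s_mono (sum_ord_only (i := i)) => [|a /negbTE ai]; last first.
  by rewrite big1 // => b _; rewrite big1 // => d _; rewrite ai mul0r.
case: leqP => //= il; rewrite (sum_ord_only (i := j)) => [|b /negbTE bj]; last first.
  by rewrite big1 // => d _; rewrite bj andbF mul0r.
case: leqP => //= jm; rewrite (sum_ord_only (i := e)) => [|d /negbTE de]; last first.
  by rewrite de !andbF mul0r.
by case: leqP => //= en; rewrite !inordK ?ltnS // !eqxx.
Qed.

Lemma eqn_subn_addn x a b : (x - a == b)%N && (a <= x)%N = (x == a + b)%N.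
Proof.
case: leqP => [le_ax|lt_xa]; last first.
  by rewrite andbF; apply/esym/negbTE; rewrite neq_ltn ltn_addr.
by rewrite andbT -(eqn_add2l a) subnKC.
Qed.

Lemma s_mono_mul c i j e c' i' j' e' :
  s_mono c i j e * s_mono c' i' j' e' = s_mono (c * c') (i + i') (j + j') (e + e').
Proof.
apply: series_ext => l m n; rewrite s_mono_mulE /s_mono -!eqn_subn_addn.
case: (i <= l)%N; case: (j <= m)%N; case: (e <= n)%N; rewrite ?andbF //= !andbT.
by case: ifP; rewrite ?mulr0.
Qed.

Lemma s_monoN c i j e : - s_mono c i j e = s_mono (- c) i j e.
Proof. by apply: series_ext => l m n; rewrite serN /s_mono; case: ifP; rewrite ?oppr0. Qed.

Lemma s_qD a b : s_q (a + b) = s_q a * s_q b.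
Proof. by rewrite /s_q s_mono_mul. Qed.

Lemma s_yq : s_y * s_q 1 = s_mono 1 1 0 1.
Proof. by rewrite /s_y /s_q s_mono_mul. Qed.

Lemma s_yqz : s_y * s_q 1 * s_z = s_mono 1 1 1 1.
Proof. by rewrite s_yq /s_z s_mono_mul. Qed.

(** * The substitution y -> y q^a *)

(* [scale_y a F] is F(y q^a). *)
Definition scale_y (a : nat) (F : series) : series := fun l m n =>
  if (a * l <= n)%N then F l m (n - a * l)%N else 0.

Definition scale_y_poly3 a (P : {poly {poly {poly int}}}) : {poly {poly {poly int}}} :=
  \poly_(l < size P) (P`_l * ('X^a)%:P ^+ l).

Lemma coef_scale_y_poly3 a P l : (scale_y_poly3 a P)`_l = P`_l * ('X^a)%:P ^+ l.
Proof. by rewrite coef_poly; case: ltnP => // le_P_l; rewrite nth_default ?mul0r. Qed.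

Lemma scale_y_poly3M a P Q :
  scale_y_poly3 a (P * Q) = scale_y_poly3 a P * scale_y_poly3 a Q.
Proof.
apply/polyP => l; rewrite coef_scale_y_poly3 !coefM big_distrl; apply: eq_bigr => i _.
by rewrite !coef_scale_y_poly3 mulrACA -exprD subnKC // -ltnS.
Qed.

Lemma of_poly3_scale_y a P : of_poly3 (scale_y_poly3 a P) = scale_y a (of_poly3 P).
Proof.
apply: series_ext => l m n.
rewrite /of_poly3 /scale_y coef_scale_y_poly3 -rmorphXn -exprM coefMC coefMXn mulnC.
by case: leqP.
Qed.

Lemma eq_on_scale_y D a F G : lower_set D ->
  eq_on D F G -> eq_on D (scale_y a F) (scale_y a G).
Proof.
move=> lowD FG l m n Dlmn; rewrite /scale_y; case: ifP => // _.
by apply: FG; apply: lowD Dlmn; rewrite ?leq_subr.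
Qed.

Lemma scale_yM a (F G : series) : scale_y a (F * G) = scale_y a F * scale_y a G.
Proof.
apply: series_ext => l m n; have low := @lower_box l m n.
have eF := @eq_on_trunc3 l m n F; have eG := @eq_on_trunc3 l m n G.
rewrite (eq_on_scale_y a low (eq_on_s_mul low eF eG)) ?box_self //.
rewrite s_mulE (eq_on_s_mul low (eq_on_scale_y a low eF) (eq_on_scale_y a low eG)) ?box_self //.
by rewrite -of_poly3M -!of_poly3_scale_y -of_poly3M scale_y_poly3M.
Qed.

Lemma scale_yB a : zmod_morphism (scale_y a).
Proof.
move=> F G; apply: series_ext => l m n.
by rewrite serB /scale_y; case: ifP; rewrite ?subr0.
Qed.

Lemma scale_y1 a : scale_y a 1 = 1.
Proof. by apply: series_ext => -[|l] m n; rewrite /scale_y ?muln0 ?subn0 //; case: ifP. Qed.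

HB.instance Definition _ a :=
  GRing.isZmodMorphism.Build series series (scale_y a) (scale_yB a).
HB.instance Definition _ a :=
  GRing.isMonoidMorphism.Build series series (scale_y a) (scale_y1 a, scale_yM a).

Lemma scale_y_comp a b F : scale_y a (scale_y b F) = scale_y (a + b) F.
Proof.
apply: series_ext => l m n; rewrite /scale_y mulnDl.
case: (leqP (a * l) n) => [le_al_n|lt_n_al]; last first.
  by rewrite ifF //; apply/negbTE; rewrite -ltnNge ltn_addr.
by rewrite leq_subRL // subnDA.
Qed.

Lemma scale_y_mono a c i j e : scale_y a (s_mono c i j e) = s_mono c i j (e + a * i).
Proof.
apply: series_ext => l m n; rewrite /scale_y /s_mono.
case: (eqVneq l i) => [->|] /=; last by case: ifP.
case: leqP => [le_ai_n|lt_n_ai]; first by rewrite -(eqn_add2r (a * i) (n - _)) subnK.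
by rewrite (_ : n == _ = false) ?andbF //; apply/negbTE; rewrite neq_ltn ltn_addl.
Qed.

(** * q-adic limits *)

Definition below_q N (l m n : nat) := (n < N)%N.
Notation eqmod N := (eq_on (below_q N)).

Lemma lower_below_q N : lower_set (below_q N).
Proof. by move=> a b c l m n _ _ le_cn; apply: leq_ltn_trans. Qed.

Lemma eqmod_le N N' F G : (N' <= N)%N -> eqmod N F G -> eqmod N' F G.
Proof. by move=> le_N'N FG l m n lt_nN'; apply: FG; apply: leq_trans le_N'N. Qed.

Lemma eqmod_ext F G : (forall N, eqmod N F G) -> F = G.
Proof. by move=> FG; apply: series_ext => l m n; apply: (FG n.+1 l m n (ltnSn n)). Qed.

Lemma eqmodM N F F' G G' : eqmod N F F' -> eqmod N G G' -> eqmod N (F * G) (F' * G').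
Proof. exact/eq_onM/lower_below_q. Qed.

Lemma eqmodM0 d e F G : eqmod d F 0 -> eqmod e G 0 -> eqmod (d + e) (F * G) 0.
Proof.
move=> F0 G0 l m n lt_n_de; rewrite s_mulE ser0; apply: big1 => a _; apply: big1 => b _.
apply: big1 => c _; case: (ltnP c d) => [lt_cd|le_dc]; first by rewrite F0 // mul0r.
by rewrite G0 ?mulr0 //; move: lt_n_de le_dc (ltn_ord c); rewrite /below_q; lia.
Qed.

Lemma eqmod_mono c i j e : eqmod e (s_mono c i j e) 0.
Proof. by move=> l m n lt_ne; rewrite /s_mono (ltn_eqF lt_ne) !andbF. Qed.

Lemma eqmod_qdiff_op N (c0 c1 c2 : series) a b X Y : eqmod N X Y ->
  eqmod N (c0 * X - c1 * scale_y a X - c2 * scale_y b X)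
          (c0 * Y - c1 * scale_y a Y - c2 * scale_y b Y).
Proof.
move=> XY; apply: eq_onB; [apply: eq_onB|]; apply: eqmodM => //.
all: exact (eq_on_scale_y _ (@lower_below_q N) XY).
Qed.

Definition qcauchy (S : nat -> series) := forall N, eqmod N (S N) (S N.+1).

Lemma qcauchy_le S N M : qcauchy S -> (N <= M)%N -> eqmod N (S N) (S M).
Proof.
move=> cS /subnKC <-; elim: (M - N)%N => [|d IHd]; first by rewrite addn0.
by apply: eq_on_trans IHd _; rewrite addnS; apply: eqmod_le (cS _); apply: leq_addr.
Qed.

Lemma qlimE S N : qcauchy S -> eqmod N (qlim S) (S N).
Proof. by move=> cS l m n lt_nN; rewrite /qlim (qcauchy_le cS lt_nN (ltnSn n)). Qed.

Definition qsum (t : nat -> series) := qlim (fun N => \sum_(n < N) t n).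

Lemma qcauchy_sum t : (forall n, eqmod n (t n) 0) -> qcauchy (fun N => \sum_(n < N) t n).
Proof.
move=> t0 N; rewrite big_ord_recr /= -[X in eqmod _ X]addr0.
by apply: eq_onD => //; apply: eq_on_sym.
Qed.

Lemma qsumE t N : (forall n, eqmod n (t n) 0) -> eqmod N (qsum t) (\sum_(n < N) t n).
Proof. by move=> t0; apply/qlimE/qcauchy_sum. Qed.

Lemma qsum_telescope (t r : nat -> series) (L : series -> series) :
  (forall X Y, L (X + Y) = L X + L Y) ->
  (forall N X Y, eqmod N X Y -> eqmod N (L X) (L Y)) ->
  (forall n, eqmod n (t n) 0) -> (forall n, eqmod n (r n) 0) -> r 0%N = 0 ->
  (forall n, L (t n) = r n - r n.+1) -> L (qsum t) = 0.
Proof.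
move=> LD Lmod t0 r0 r0_0 Lt.
have L0 : L 0 = 0 by apply: (addrI (L 0)); rewrite -LD !addr0.
have Lsum N : L (\sum_(n < N) t n) = - r N.
  elim: N => [|N IHN]; first by rewrite big_ord0 L0 r0_0 oppr0.
  by rewrite big_ord_recr LD IHN Lt addrA addNr sub0r.
apply: eqmod_ext => N; apply: eq_on_trans (Lmod N _ _ (qsumE t0)) _.
by rewrite Lsum -oppr0 => l m n /(r0 N) rN0; rewrite !serN rN0.
Qed.

Lemma s_invE F : s_inv F = qsum (fun i => (1 - F) ^+ i).
Proof.
congr qlim; apply/funext => N; apply: eq_bigr => i _.
by elim: (i : nat) => // j IHj; rewrite exprS -IHj.
Qed.

Lemma mul_s_inv F : eqmod 1 F 1 -> s_inv F * F = 1.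
Proof.
move=> F1; set G := 1 - F.
have G0 : eqmod 1 G 0 by rewrite -(subrr 1); apply: eq_onB => //; apply: eq_on_sym.
have Gi0 i : eqmod i (G ^+ i) 0.
  by elim: i => [|i IHi] //; rewrite exprS -[i.+1]add1n; apply: eqmodM0.
have geom N : (\sum_(i < N) G ^+ i) * F = 1 - G ^+ N.
  rewrite (_ : F = 1 - G); last by rewrite /G opprB addrC subrK.
  elim: N => [|N IHN]; first by rewrite big_ord0 mul0r expr0 subrr.
  by rewrite big_ord_recr /= mulrDl IHN exprS; ring.
apply: eqmod_ext => N; rewrite s_invE.
apply: (@eq_on_trans _ _ ((\sum_(i < N) G ^+ i) * F)).
  by apply: eqmodM => //; apply: qsumE.
by rewrite geom -[X in eqmod _ _ X]subr0; apply: eq_onB.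
Qed.

Lemma left_inverse_unique (X Y F : series) : X * F = 1 -> Y * F = 1 -> X = Y.
Proof. by move=> XF YF; rewrite -[X]mulr1 -YF mulrCA XF mulr1. Qed.

(** * q-Pochhammer symbols *)

Lemma qpochE A b N : qpoch A b N = \prod_(j < N) (1 - A * s_q (b * j)).
Proof. by []. Qed.

Lemma qpochS A b N : qpoch A b N.+1 = qpoch A b N * (1 - A * s_q (b * N)).
Proof. by rewrite !qpochE big_ord_recr. Qed.

Lemma qpoch_eq_on1 D A b N : lower_set D -> eq_on D A 0 -> eq_on D (qpoch A b N) 1.
Proof.
move=> lowD A0; rewrite qpochE.
rewrite -[X in eq_on _ _ X](@big1_eq series 1 *%R _ (index_enum 'I_N) xpredT).
apply: eq_on_prod => // j _; rewrite -[X in eq_on _ _ X]subr0.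
by apply: eq_onB => //; rewrite -(mul0r (s_q (b * j))); apply: eq_onM.
Qed.

Lemma qpoch_inf_eq_on1 D A b : lower_set D -> eq_on D A 0 -> eq_on D (qpoch_inf A b) 1.
Proof. by move=> lowD A0 l m n; apply: (@qpoch_eq_on1 D A b n.+1 lowD A0). Qed.

Lemma qcauchy_qpoch A b : eqmod 1 A 0 -> (0 < b)%N -> qcauchy (qpoch A b).
Proof.
move=> A0 b_gt0 N; rewrite qpochS -[X in eqmod _ X _]mulr1; apply: eqmodM => //.
rewrite -[X in eqmod _ X _]subr0; apply: eq_onB => //; apply: eq_on_sym.
by apply: (@eqmod_le (1 + b * N)); [nia | apply: (eqmodM0 A0); apply: eqmod_mono].
Qed.

Lemma qpoch_infE A b N M : eqmod 1 A 0 -> (0 < b)%N -> (N <= M)%N ->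
  eqmod N (qpoch_inf A b) (qpoch A b M).
Proof.
move=> A0 b_gt0 le_NM; have cA := qcauchy_qpoch A0 b_gt0.
exact: eq_on_trans (qlimE cA) (qcauchy_le cA le_NM).
Qed.

Definition at_y0 (l m n : nat) := l == 0%N.

Lemma lower_at_y0 : lower_set at_y0.
Proof. by move=> a b c l m n le_al _ _ /eqP l0; move: le_al; rewrite l0 leqn0. Qed.

(* [ypoch c N] is (c y q; q)_N. *)
Definition ypoch (c : int) N := qpoch (s_mono c 1 0 1) 1 N.
Definition ypoch_inf (c : int) := qpoch_inf (s_mono c 1 0 1) 1.

Lemma ypochE c N : ypoch c N = \prod_(j < N) (1 - s_mono c 1 0 j.+1).
Proof.
by rewrite /ypoch qpochE; apply: eq_bigr => j _; rewrite /s_q s_mono_mul mulr1 mul1n.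
Qed.

Lemma ypoch1 c : ypoch c 1 = 1 - s_mono c 1 0 1.
Proof. by rewrite ypochE big_ord1. Qed.

Lemma ypoch_infE c N M : (N <= M)%N -> eqmod N (ypoch_inf c) (ypoch c M).
Proof. by apply: qpoch_infE; first exact: eqmod_mono. Qed.

Lemma ypoch_inf_split c a : ypoch_inf c = ypoch c a * scale_y a (ypoch_inf c).
Proof.
apply: eqmod_ext => N.
have shift : scale_y a (ypoch c N) = \prod_(i < N) (1 - s_mono c 1 0 (a + i).+1).
  rewrite ypochE rmorph_prod; apply: eq_bigr => j _.
  by rewrite rmorphB rmorph1 /= scale_y_mono muln1 addSn addnC.
apply: eq_on_trans (ypoch_infE c (leq_addl a N)) _.
rewrite ypochE big_split_ord /= -ypochE -shift; apply: eqmodM => //.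
exact/(eq_on_scale_y a (@lower_below_q N))/eq_on_sym/ypoch_infE.
Qed.

Lemma ypoch_inf_eqmod1 c : eqmod 1 (ypoch_inf c) 1.
Proof. by apply: qpoch_inf_eq_on1; [apply: lower_below_q | apply: eqmod_mono]. Qed.

Lemma ypoch_inf_y0 c : eq_on at_y0 (ypoch_inf c) 1.
Proof. by apply: qpoch_inf_eq_on1 lower_at_y0 _ => l m n /eqP ->; rewrite ser0 /s_mono. Qed.

(** * The two sums *)

Section Terms.
Variable k : nat.

Definition qratio n := qpoch s_z k n * s_inv (qpoch (s_q 1) 1 n).

Lemma mul_s_inv_qpoch_q n : s_inv (qpoch (s_q 1) 1 n) * qpoch (s_q 1) 1 n = 1.
Proof. by apply/mul_s_inv/qpoch_eq_on1; [apply: lower_below_q | apply: eqmod_mono]. Qed.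

Lemma qratio0 : qratio 0 = 1.
Proof. by rewrite /qratio -[RHS](mul_s_inv_qpoch_q 0) !qpochE !big_ord0 mulr1 mul1r. Qed.

Lemma qratioS n : qratio n.+1 * (1 - s_q n.+1) = (1 - s_z * s_q (k * n)) * qratio n.
Proof.
have qS : qpoch (s_q 1) 1 n.+1 = (1 - s_q n.+1) * qpoch (s_q 1) 1 n.
  by rewrite qpochS mulrC /s_q s_mono_mul mul1n mulr1.
have invS : s_inv (qpoch (s_q 1) 1 n.+1) * (1 - s_q n.+1) = s_inv (qpoch (s_q 1) 1 n).
  apply: left_inverse_unique (mul_s_inv_qpoch_q n).
  by rewrite -mulrA -qS mul_s_inv_qpoch_q.
by rewrite /qratio qpochS -mulrA invS; ring.
Qed.

Lemma scale_y_qratio a n : scale_y a (qratio n) = qratio n.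
Proof.
have yfree e : scale_y a (s_q e) = s_q e by rewrite scale_y_mono muln0 addn0.
have qpochF A b : scale_y a A = A -> scale_y a (qpoch A b n) = qpoch A b n.
  move=> aA; rewrite rmorph_prod; apply: eq_bigr => j _.
  by rewrite rmorphB rmorph1 rmorphM /= aA yfree.
have qpoch_q : scale_y a (qpoch (s_q 1) 1 n) = qpoch (s_q 1) 1 n by apply: qpochF.
rewrite /qratio rmorphM /= qpochF ?scale_y_mono ?muln0 ?addn0 //; congr (_ * _).
apply: left_inverse_unique (mul_s_inv_qpoch_q n).
by rewrite -[X in _ * X]qpoch_q -rmorphM mul_s_inv_qpoch_q rmorph1.
Qed.

Variable e : nat -> nat.
Hypothesis e0 : e 0 = 0%N.
Hypothesis e_incr : forall n, (e n < e n.+1)%N.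

Definition term n := s_mono ((-1) ^+ n) n 0 (e n) * qratio n.

Lemma term_eqmod n : eqmod n (term n) 0.
Proof.
have e_ge : (n <= e n)%N by elim: n => // n IHn; apply: leq_ltn_trans IHn (e_incr n).
by apply: (@eqmod_le (e n + 0)); [rewrite addn0 | apply: eqmodM0; first apply: eqmod_mono].
Qed.

Lemma term_tail_eqmod n : eqmod n (term n * (1 - s_q n)) 0.
Proof. by rewrite -[X in below_q X]addn0; apply: eqmodM0; first exact: term_eqmod. Qed.

Lemma termS n : term n.+1 * (1 - s_q n.+1) =
  - s_y * s_q (e n.+1 - e n) * (1 - s_z * s_q (k * n)) * term n.
Proof.
have monoS : s_mono ((-1) ^+ n.+1) n.+1 0 (e n.+1) =
    - s_y * s_q (e n.+1 - e n) * s_mono ((-1) ^+ n) n 0 (e n).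
  by rewrite /s_y /s_q s_monoN !s_mono_mul (subnK (ltnW (e_incr n))) mulr1 -exprS.
by rewrite /term monoS -mulrA qratioS; ring.
Qed.

Lemma scale_y_term a n : scale_y a (term n) = s_q (a * n) * term n.
Proof.
by rewrite /term rmorphM /= scale_y_qratio scale_y_mono mulrA /s_q s_mono_mul mul1r addnC.
Qed.

Lemma qsum_term_y0 : eq_on at_y0 (qsum term) 1.
Proof.
move=> l m n /eqP ->; rewrite /qsum /qlim ser_sum big_ord_recl big1 => [|i _].
  by rewrite /term qratio0 e0 mulr1 addr0.
by rewrite /term s_mono_mulE.
Qed.

End Terms.

Definition tri n := (n * n.+1)./2.

Lemma triS n : tri n.+1 = (tri n + n.+1)%N.
Proof.
rewrite /tri (_ : n.+1 * n.+2 = n * n.+1 + n.+1.*2)%N; last by rewrite -muln2; nia.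
by rewrite halfD odd_double andbF doubleK.
Qed.

Lemma tri_incr n : (tri n < tri n.+1)%N.
Proof. by rewrite triS -addn1 leq_add2l. Qed.

Lemma id_incr n : (id n < id n.+1)%N.
Proof. exact: ltnSn. Qed.

Definition sum_tri k := qsum (term k tri).
Definition sum_lin k := qsum (term k id).

Lemma sum_tri_funeq k : sum_tri k =
  (1 - s_y * s_q 1) * scale_y 1 (sum_tri k) + s_y * s_q 1 * s_z * scale_y k.+1 (sum_tri k).
Proof.
apply/subr0_eq; rewrite opprD addrA -{1}(mul1r (sum_tri k)).
apply: (@qsum_telescope (term k tri) (fun n => term k tri n * (1 - s_q n))
  (fun X => 1 * X - (1 - s_y * s_q 1) * scale_y 1 X - s_y * s_q 1 * s_z * scale_y k.+1 X)).
- by move=> X Y; rewrite !rmorphD; ring.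
- by move=> N X Y; apply: eqmod_qdiff_op.
- by move=> n; apply: (term_eqmod k tri_incr).
- by move=> n; apply: (term_tail_eqmod k tri_incr).
- by rewrite subrr mulr0.
- move=> n; rewrite termS; last exact: tri_incr.
  rewrite !scale_y_term triS addKn mul1n mulSn (s_qD n) -[n.+1]add1n (s_qD 1).
  by ring.
Qed.

Lemma sum_lin_funeq k : (1 + s_y * s_q 1) * sum_lin k =
  scale_y 1 (sum_lin k) + s_y * s_q 1 * s_z * scale_y k (sum_lin k).
Proof.
apply/subr0_eq; rewrite opprD addrA -(mul1r (scale_y 1 (sum_lin k))).
apply: (@qsum_telescope (term k id) (fun n => term k id n * (1 - s_q n))
  (fun X => (1 + s_y * s_q 1) * X - 1 * scale_y 1 X - s_y * s_q 1 * s_z * scale_y k X)).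
- by move=> X Y; rewrite !rmorphD; ring.
- by move=> N X Y; apply: eqmod_qdiff_op.
- by move=> n; apply: (term_eqmod k id_incr).
- by move=> n; apply: (term_tail_eqmod k id_incr).
- by rewrite subrr mulr0.
- move=> n; rewrite termS; last exact: id_incr.
  by rewrite !scale_y_term mul1n subSnn; ring.
Qed.

(** * Nonnegativity *)

Definition nonneg (F : series) := forall l m n, 0 <= F l m n.

Lemma nonneg_mono c i j e : 0 <= c -> nonneg (s_mono c i j e).
Proof. by move=> c_ge0 l m n; rewrite /s_mono; case: ifP. Qed.

Lemma nonneg1 : nonneg 1.
Proof. exact/nonneg_mono/ler01. Qed.

Lemma nonnegD F G : nonneg F -> nonneg G -> nonneg (F + G).
Proof. by move=> F0 G0 l m n; rewrite serD addr_ge0. Qed.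

Lemma nonnegM F G : nonneg F -> nonneg G -> nonneg (F * G).
Proof. by move=> F0 G0 l m n; do 3 (apply: sumr_ge0 => ? _); apply: mulr_ge0. Qed.

Lemma nonneg_prod I (r : seq I) (P : pred I) (F : I -> series) :
  (forall i, P i -> nonneg (F i)) -> nonneg (\prod_(i <- r | P i) F i).
Proof. by move=> F0; apply: big_ind => //; [apply: nonneg1 | apply: nonnegM]. Qed.

Lemma nonneg_scale_y a F : nonneg F -> nonneg (scale_y a F).
Proof. by move=> F0 l m n; rewrite /scale_y; case: ifP. Qed.

Lemma nonneg_s_inv1B X : nonneg X -> nonneg (s_inv (1 - X)).
Proof.
move=> X0; have Xj j : nonneg (X ^+ j).
  by elim: j => [|j IHj]; [apply: nonneg1 | rewrite exprS; apply: nonnegM].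
move=> l m n; rewrite s_invE opprB addrC subrK /qsum /qlim ser_sum.
by apply: sumr_ge0 => i _; apply: Xj.
Qed.

Lemma nonneg_funeq (B H : series) a : eq_on at_y0 B 1 -> nonneg H ->
  B = scale_y 1 B + s_y * s_q 1 * s_z * H * scale_y a B -> nonneg B.
Proof.
move=> B1 H0 eqB l; elim/ltn_ind: l => -[_|l IHl] m n; first by rewrite B1 //; apply: nonneg1.
elim/ltn_ind: n => n IHn; rewrite eqB serD; apply: addr_ge0.
  rewrite /scale_y mul1n; case: leqP => // le_ln; apply: IHn.
  by rewrite -subn_gt0 subKn.
rewrite s_yqz -mulrA s_mono_mulE; case: ifP => // _; rewrite mul1r.
do 3 (apply: sumr_ge0 => ? _); apply: mulr_ge0 => //.
rewrite /scale_y; case: ifP => // _; apply: IHl.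
by apply: leq_ltn_trans (leq_subr _ _) _; rewrite subn1.
Qed.

Lemma series1E k : series1 k = s_inv (ypoch_inf 1) * sum_tri k.
Proof. by rewrite /series1 (_ : s_mul s_y (s_q 1) = s_mono 1 1 0 1) //; apply: s_yq. Qed.

Lemma series2E k : series2 k = ypoch_inf (-1) * sum_lin k.
Proof.
by rewrite /series2 (_ : s_opp (s_mul s_y (s_q 1)) = s_mono (-1) 1 0 1) // -s_monoN -s_yq.
Qed.

Lemma nonneg_series1 k : nonneg (series1 k).
Proof.
rewrite series1E; set P := s_inv (ypoch_inf 1).
have PQ : P * ypoch_inf 1 = 1 by apply/mul_s_inv/ypoch_inf_eqmod1.
have P1 : eq_on at_y0 P 1.
  rewrite -PQ -{1}[P]mulr1.
  exact (eq_onM lower_at_y0 (@eq_on_refl _ _) (eq_on_sym (ypoch_inf_y0 1))).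
have scaleP a : scale_y a P = P * ypoch 1 a.
  apply: left_inverse_unique (_ : scale_y a P * scale_y a (ypoch_inf 1) = 1) _.
    by rewrite -scale_yM PQ scale_y1.
  by rewrite -mulrA -ypoch_inf_split.
pose H := \prod_(j < k.+1) s_inv (1 - s_mono 1 1 0 j.+1).
have HY : H * ypoch 1 k.+1 = 1.
  rewrite ypochE -big_split; apply: big1 => j _; apply: mul_s_inv.
  rewrite -[X in eqmod _ _ X]subr0; apply: eq_onB => //.
  by apply: (@eqmod_le j.+1); last exact: eqmod_mono.
apply: (@nonneg_funeq _ H k.+1).
- rewrite -[X in eq_on _ _ X]mulr1.
  exact (eq_onM lower_at_y0 P1 (qsum_term_y0 k (e := tri) erefl)).
- by apply: nonneg_prod => j _; apply/nonneg_s_inv1B/nonneg_mono.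
- by rewrite !scale_yM !scaleP ypoch1 -s_yq; ring: HY (sum_tri_funeq k).
Qed.

Lemma nonneg_series2 k : (0 < k)%N -> nonneg (series2 k).
Proof.
move=> k_gt0; rewrite series2E; set R := ypoch_inf (-1).
have R1 : R = (1 + s_y * s_q 1) * scale_y 1 R.
  by rewrite {1}/R (ypoch_inf_split (-1) 1) ypoch1 -s_monoN opprK s_yq.
set H := scale_y 1 (ypoch (-1) k.-1).
have Rk : scale_y 1 R = H * scale_y k R.
  by rewrite {1}/R (ypoch_inf_split (-1) k.-1) scale_yM scale_y_comp add1n prednK.
apply: (@nonneg_funeq _ H k).
- rewrite -[X in eq_on _ _ X]mulr1.
  exact (eq_onM lower_at_y0 (ypoch_inf_y0 (-1)) (qsum_term_y0 k (e := id) erefl)).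
- apply/nonneg_scale_y; rewrite ypochE; apply: nonneg_prod => j _.
  by rewrite -s_monoN opprK; apply: nonnegD; [apply: nonneg1 | apply: nonneg_mono].
- by rewrite !scale_yM {1}R1 -mulrA mulrCA sum_lin_funeq Rk; ring.
Qed.

Theorem corollary1p8 (k : nat) (hk : (1 <= k)%N) (l m n : nat) :
  0 <= series1 k l m n /\ 0 <= series2 k l m n.
Proof. by split; [apply: nonneg_series1 | apply: nonneg_series2]. Qed.
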